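(* For $\mathfrak{g}=\mathfrak{sl}_2(\mathbb{C})$ we have $\operatorname{QDer}(\mathfrak{g})=\operatorname{End}(\mathfrak{g})$; that is, for every linear map $\phi:\mathfrak{g}\to\mathfrak{g}$ there is a linear map $\tau:\mathfrak{g}\to\mathfrak{g}$ with $\tau([x,y])=[\phi(x),y]+[x,\phi(y)]$ for all $x,y\in\mathfrak{g}$.
   Context: The space of quasiderivations of a Lie algebra $\mathfrak{g}$ is $\operatorname{QDer}(\mathfrak{g})=\{\phi\in\operatorname{End}(\mathfrak{g})\mid\exists\,\tau\in\operatorname{End}(\mathfrak{g})\text{ with }\tau([x,y])=[\phi(x),y]+[x,\phi(y)]\ \forall x,y\in\mathfrak{g}\}$. *)

From HB Require Import structures.
From mathcomp Require Import all_boot all_order all_algebra.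
From mathcomp Require Import complex Rstruct.
From Stdlib Require Import Reals.
Set Implicit Arguments. Unset Strict Implicit. Unset Printing Implicit Defensive.
Import Order.TTheory GRing.Theory Num.Theory.
Local Open Scope ring_scope.

Definition CC : Type := complex Rdefinitions.R.

Definition sl2 (A : 'M[CC]_2) : bool := \tr A == 0.

Definition lie (A B : 'M[CC]_2) : 'M[CC]_2 := A *m B - B *m A.

(* For linear phi the map D(x, y) = [phi x, y] + [x, phi y] is bilinear and
   alternating.  Because [h, e] = 2e, [h, f] = -2f and [e, f] = h, the bracket of
   sl_2 is an isomorphism from its exterior square onto sl_2, so every alternating
   bilinear map on sl_2 factors through it: tau is the linear map sending h, e, f
   to D(e, f), D(h, e)/2 and -D(h, f)/2, and tau o [_, _] agrees with D because
   two alternating bilinear maps on sl_2 that agree on (h, e), (h, f), (e, f)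
   agree everywhere. *)

From HB Require Import structures.
From mathcomp Require Import all_boot all_order all_algebra.
From mathcomp Require Import complex Rstruct ring.

Set Implicit Arguments.
Unset Strict Implicit.
Unset Printing Implicit Defensive.

Import GRing.Theory Num.Theory.
Local Open Scope ring_scope.

Section AlternatingBilinear.
Variables (R : nzRingType) (U V : lmodType R) (B : {bilinear U -> U -> V}).
Hypothesis B_alt : forall x, B x x = 0.

Lemma alt_bilinear_skew x y : B y x = - B x y.
Proof.
apply/eqP; rewrite -addr_eq0 addrC.
by have := B_alt (x + y); rewrite !(linearDl, linearDr) !B_alt add0r addr0 => ->.
Qed.
End AlternatingBilinear.

Lemma lie_is_bilinear : bilinear_for *:%R *:%R lie.
Proof.
split=> [y|x] a u v /=; rewrite /lie mulmxDl mulmxDr -scalemxAl -scalemxAr;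
  by rewrite scalerBr opprD addrACA.
Qed.

HB.instance Definition _ := bilinear_isBilinear.Build CC _ _ _ _ _ lie lie_is_bilinear.

Lemma lie_alt x : lie x x = 0.
Proof. exact: subrr. Qed.

Lemma sl2_lie x y : sl2 (lie x y).
Proof. by rewrite /sl2 /lie raddfB /= mxtrace_mulC subrr. Qed.

Definition sl2_h : 'M[CC]_2 := delta_mx 0 0 - delta_mx 1 1.
Definition sl2_e : 'M[CC]_2 := delta_mx 0 1.
Definition sl2_f : 'M[CC]_2 := delta_mx 1 0.

Lemma lie_he : lie sl2_h sl2_e = 2 *: sl2_e.
Proof.
rewrite /lie /sl2_h /sl2_e mulmxBl mulmxBr !mul_delta_mx !mul_delta_mx_0 //.
by rewrite subr0 sub0r opprK scaler_nat.
Qed.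

Lemma lie_hf : lie sl2_h sl2_f = - (2 *: sl2_f).
Proof.
rewrite /lie /sl2_h /sl2_f mulmxBl mulmxBr !mul_delta_mx !mul_delta_mx_0 //.
by rewrite sub0r subr0 scaler_nat opprD.
Qed.

Lemma lie_ef : lie sl2_e sl2_f = sl2_h.
Proof. by rewrite /lie /sl2_e /sl2_f !mul_delta_mx. Qed.

Lemma ord2_cases (i : 'I_2) : i = 0 \/ i = 1.
Proof. by case: i => [[|[|//]] ?]; [left | right]; apply: val_inj. Qed.

Lemma sl2_decomp x : sl2 x -> x = x 0 0 *: sl2_h + x 0 1 *: sl2_e + x 1 0 *: sl2_f.
Proof.
rewrite /sl2 /mxtrace !big_ord_recl big_ord0 addr0 => /eqP tr0.
have x11 : x 1 1 = - x 0 0.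
  by apply: (addrI (x 0 0)); rewrite subrr -tr0; congr (x _ _ + x _ _); apply: val_inj.
apply/matrixP=> i j; rewrite !mxE.
by case: (ord2_cases i) (ord2_cases j) => -> [] ->; rewrite ?x11 /=; ring.
Qed.

Lemma sl2_alt_bilinear_eq (B1 B2 : {bilinear 'M[CC]_2 -> 'M[CC]_2 -> 'M[CC]_2}) :
  (forall z, B1 z z = 0) -> (forall z, B2 z z = 0) ->
  B1 sl2_h sl2_e = B2 sl2_h sl2_e -> B1 sl2_h sl2_f = B2 sl2_h sl2_f ->
  B1 sl2_e sl2_f = B2 sl2_e sl2_f ->
  forall x y, sl2 x -> sl2 y -> B1 x y = B2 x y.
Proof.
move=> B1_alt B2_alt + + + x y /sl2_decomp Ex /sl2_decomp Ey.
move: sl2_h sl2_e sl2_f Ex Ey => h e f -> -> Bhe Bhf Bef.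
rewrite !(linearDl, linearDr, linearZl_LR, linearZr_LR) !B1_alt !B2_alt.
rewrite !(alt_bilinear_skew B1_alt h e, alt_bilinear_skew B1_alt h f).
rewrite !(alt_bilinear_skew B1_alt e f, alt_bilinear_skew B2_alt h e).
by rewrite !(alt_bilinear_skew B2_alt h f, alt_bilinear_skew B2_alt e f) Bhe Bhf Bef.
Qed.

Definition leibniz (phi : 'M[CC]_2 -> 'M[CC]_2) x y := lie (phi x) y + lie x (phi y).

Lemma leibniz_is_bilinear (phi : {linear 'M[CC]_2 -> 'M[CC]_2}) : 
  bilinear_for *:%R *:%R (leibniz phi).
Proof.
split=> [y|x] a u v /=; rewrite /leibniz linearP;
  by rewrite !(linearDl, linearDr, linearZl_LR, linearZr_LR) scalerDr addrACA.
Qed.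

HB.instance Definition _ (phi : {linear 'M[CC]_2 -> 'M[CC]_2}) :=
  bilinear_isBilinear.Build CC _ _ _ _ _ (leibniz phi) (leibniz_is_bilinear phi).

Lemma leibniz_alt (phi : 'M[CC]_2 -> 'M[CC]_2) x : leibniz phi x x = 0.
Proof. by rewrite /leibniz (alt_bilinear_skew lie_alt) addNr. Qed.

Lemma sl2_leibniz phi x y : sl2 (leibniz phi x y).
Proof. by rewrite /sl2 /leibniz mxtraceD !(eqP (sl2_lie _ _)) addr0. Qed.

Lemma sl2Z a x : sl2 x -> sl2 (a *: x).
Proof. by rewrite /sl2 mxtraceZ => /eqP->; rewrite mulr0. Qed.

(* The linear map sending h, e, f to a, b, c and killing scalar matrices;
   (M 0 0 - M 1 1) / 2 is the h-coordinate of a traceless M. *)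
Definition sl2_extend (a b c M : 'M[CC]_2) : 'M[CC]_2 :=
  ((M 0 0 - M 1 1) / 2) *: a + M 0 1 *: b + M 1 0 *: c.

Lemma sl2_extend_is_linear a b c : linear (sl2_extend a b c).
Proof. by move=> k M N; apply/matrixP=> i j; rewrite /sl2_extend !mxE; ring. Qed.

HB.instance Definition _ a b c :=
  GRing.isLinear.Build CC _ _ *:%R (sl2_extend a b c) (sl2_extend_is_linear a b c).

Lemma sl2_extend_h a b c : sl2_extend a b c sl2_h = a.
Proof.
have two_neq0 : (2 : CC) != 0 by rewrite pnatr_eq0.
by apply/matrixP=> i j; rewrite /sl2_extend !mxE /=; field.
Qed.

Lemma sl2_extend_e a b c : sl2_extend a b c sl2_e = b.
Proof. by apply/matrixP=> i j; rewrite /sl2_extend !mxE /=; ring. Qed.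

Lemma sl2_extend_f a b c : sl2_extend a b c sl2_f = c.
Proof. by apply/matrixP=> i j; rewrite /sl2_extend !mxE /=; ring. Qed.

Lemma sl2_extend_sl2 a b c M : sl2 a -> sl2 b -> sl2 c -> sl2 (sl2_extend a b c M).
Proof.
rewrite /sl2 /sl2_extend => /eqP ta /eqP tb /eqP tc.
by rewrite !mxtraceD !mxtraceZ ta tb tc !mulr0 !addr0.
Qed.

Definition lie_comp (tau : 'M[CC]_2 -> 'M[CC]_2) x y := tau (lie x y).

Lemma lie_comp_is_bilinear (tau : {linear 'M[CC]_2 -> 'M[CC]_2}) : 
  bilinear_for *:%R *:%R (lie_comp tau).
Proof. by split=> [y|x] a u v /=; rewrite /lie_comp (linearPl, linearPr) linearP. Qed.

HB.instance Definition _ (tau : {linear 'M[CC]_2 -> 'M[CC]_2}) :=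
  bilinear_isBilinear.Build CC _ _ _ _ _ (lie_comp tau) (lie_comp_is_bilinear tau).

Lemma lie_comp_alt (tau : {linear 'M[CC]_2 -> 'M[CC]_2}) x : lie_comp tau x x = 0.
Proof. by rewrite /lie_comp lie_alt linear0. Qed.

Theorem proposition5p10 :
  forall phi : {linear 'M[CC]_2 -> 'M[CC]_2},
    (forall x, sl2 x -> sl2 (phi x)) ->
    exists tau : {linear 'M[CC]_2 -> 'M[CC]_2},
      (forall x, sl2 x -> sl2 (tau x)) /\
      (forall x y, sl2 x -> sl2 y ->
         tau (lie x y) = lie (phi x) y + lie x (phi y)).
Proof.
move=> phi _; pose D := leibniz phi.
pose tau := sl2_extend (D sl2_e sl2_f) (2^-1 *: D sl2_h sl2_e) (- 2^-1 *: D sl2_h sl2_f).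
have two_neq0 : (2 : CC) != 0 by rewrite pnatr_eq0.
exists tau; split=> [M _ | ].
  by apply: sl2_extend_sl2; try apply: sl2Z; apply: sl2_leibniz.
apply: (sl2_alt_bilinear_eq (B1 := lie_comp tau) (B2 := D)).
- exact: lie_comp_alt.
- exact: leibniz_alt.
- by rewrite /= /lie_comp lie_he linearZ /= sl2_extend_e scalerA mulfV ?scale1r.
- rewrite /= /lie_comp lie_hf linearN linearZ /= sl2_extend_f scalerA.
  by rewrite mulrN mulfV ?scaleN1r ?opprK.
- by rewrite /= /lie_comp lie_ef sl2_extend_h.
Qed.
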